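(* Let $\mathcal{M}=\langle M,\circ,e\rangle$ be an effective mge monoid and let $\mathcal{T}=\langle \Sigma^*\times\mathcal{M},Q,I,F,\Delta\rangle$ be an arbitrary (not necessarily real-time) functional monoidal finite-state transducer with $\langle\varepsilon,e\rangle\in L(\mathcal{T})$. Then there is a bimachine $\mathcal{B}=\langle\mathcal{M},\mathcal{A}_L,\mathcal{A}_R,\psi\rangle$ such that $\mathcal{A}_L$ has at most $2^{|Q|}$ states, $\mathcal{A}_R$ has at most $2^{|Q|}$ states, and $O_{\mathcal{B}}=O_{\mathcal{T}}$ (as partial functions $\Sigma^*\to M$).
   Context: A monoid $\langle M,\circ,e\rangle$ has right cancellation if $ac=bc$ implies $a=b$. A tuple $\langle m_1,\dots,m_n\rangle\in M^n$ is equalizable if there is $\langle x_1,\dots,x_n\rangle\in M^n$ (an equalizer) with $m_1x_1=\dots=m_nx_n$; an instance of an equalizer $\langle x_1,\dots,x_n\rangle$ is any $\langle x_1x,\dots,x_nx\rangle$ with $x\in M$; a most general equalizer (mge) is an equalizer of which every equalizer is an instance. An mge monoid is a monoid with right cancellation in which every equalizable pair has an mge. An element $m$ is invertible if $mn=e$ for some $n$ (denoted $m^{-1}$). An mge monoid is effective if (i) $M$ is represented as a recursive subset of $\mathbb{N}$ with computable operation, (ii) equality is decidable, (iii) it is decidable whether a pair is equalizable and there is a computable function $\eta:M^2\to M^2$ with $\eta(m,m')$ an mge of $\langle m,m'\rangle$ for every equalizable pair, (iv) inverses of invertible elements are computable. A monoidal finite-state transducer is $\mathcal{T}=\langle\Sigma^*\times\mathcal{M},Q,I,F,\Delta\rangle$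 with $\Sigma$ a finite alphabet, $Q$ finite, $I,F\subseteq Q$, and finite $\Delta\subseteq Q\times((\Sigma\cup\{\varepsilon\})\times M)\times Q$. The generalized transition relation $\Delta^*$ is the least set containing $\langle q,\langle\varepsilon,e\rangle,q\rangle$ for all $q$ and closed under: $\langle q_1,\langle u,w\rangle,q_2\rangle\in\Delta^*$ and $\langle q_2,\langle a,m\rangle,q_3\rangle\in\Delta$ imply $\langle q_1,\langle ua,wm\rangle,q_3\rangle\in\Delta^*$. $L(\mathcal{T})=\{\langle u,m\rangle:\exists p\in I,q\in F,\ \langle p,\langle u,m\rangle,q\rangle\in\Delta^*\}$. $\mathcal{T}$ is functional if $L(\mathcal{T})$ is (the graph of) a partial function, denoted $O_{\mathcal{T}}:\Sigma^*\to M$. A bimachine is $\mathcal{B}=\langle\mathcal{M},\mathcal{A}_L,\mathcal{A}_R,\psi\rangle$ where $\mathcal{A}_L=\langle\Sigma,L,s_L,L,\delta_L\rangle$ and $\mathcal{A}_R=\langle\Sigma,R,s_R,R,\delta_R\rangle$ are deterministic finite automata (all states final) and $\psi:L\times\Sigma\times R\to M$ is a partial function. Define $\psi^*(l,\varepsilon,r)=e$ and $\psi^*(l,t\sigma,r)=\psi^*(l,t,\delta_R(r,\sigma))\circ\psi(\delta_L^*(l,t),\sigma,r)$; the function represented by $\mathcal{B}$ is $O_{\mathcal{B}}(t)=\psi^*(s_L,t,s_R)$ (partial). *)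

From mathcomp Require Import all_boot.
Set Implicit Arguments. Unset Strict Implicit. Unset Printing Implicit Defensive.

Section Monoid.
Variables (M : eqType) (op : M -> M -> M) (e : M).

Definition is_monoid : Prop :=
  [/\ forall a b c, op a (op b c) = op (op a b) c,
      forall a, op e a = a & forall a, op a e = a].

Definition right_cancellative : Prop :=
  forall a b c, op a c = op b c -> a = b.

Definition equalizer (m1 m2 : M) (x : M * M) : Prop :=
  op m1 x.1 = op m2 x.2.

Definition equalizable (m1 m2 : M) : Prop := exists x, equalizer m1 m2 x.

Definition instance_of (x y : M * M) : Prop :=
  exists z, y = (op x.1 z, op x.2 z).

Definition mge (m1 m2 : M) (x : M * M) : Prop :=
  equalizer m1 m2 x /\ forall y, equalizer m1 m2 y -> instance_of x y.

Definition is_mge_monoid : Prop :=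
  [/\ is_monoid, right_cancellative &
      forall m1 m2, equalizable m1 m2 -> exists x, mge m1 m2 x].

Definition invertible (m : M) : Prop := exists n, op m n = e.

(* Effectiveness: the carrier has decidable equality (eqType), the operation
   is a (computable) Rocq function, and the deciders / mge function / inverse
   function are given as Rocq functions with their specifications. *)
Definition is_effective (eqz : M -> M -> bool) (eta : M -> M -> M * M)
  (inv : M -> M) : Prop :=
  [/\ forall m1 m2, eqz m1 m2 <-> equalizable m1 m2,
      forall m1 m2, equalizable m1 m2 -> mge m1 m2 (eta m1 m2) &
      forall m, invertible m -> op m (inv m) = e].

End Monoid.

Section Transducer.
Variables (M : eqType) (op : M -> M -> M) (e : M).
Variables (Sigma Q : finType).
(* transitions <q, <a, m>, q'> with a in Sigma \cup {eps} (None = eps) *)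
Variable Delta : seq (Q * (option Sigma * M) * Q).

Inductive delta_star : Q -> seq Sigma -> M -> Q -> Prop :=
| ds_refl q : delta_star q [::] e q
| ds_step q1 u w q2 a m q3 :
    delta_star q1 u w q2 -> (q2, (a, m), q3) \in Delta ->
    delta_star q1 (if a is Some s then rcons u s else u) (op w m) q3.

Definition lang (I F : {set Q}) (u : seq Sigma) (m : M) : Prop :=
  exists p q, [/\ p \in I, q \in F & delta_star p u m q].

Definition functional (I F : {set Q}) : Prop :=
  forall u m m', lang I F u m -> lang I F u m' -> m = m'.
End Transducer.

Section Bimachine.
Variables (M : eqType) (op : M -> M -> M) (e : M).
Variables (Sigma L R : finType).
Variables (dL : L -> Sigma -> L) (dR : R -> Sigma -> R).
Variable psi : L -> Sigma -> R -> option M.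

(* psi_star on the reversed word: rt = rev t *)
Fixpoint psi_star_rev (l : L) (rt : seq Sigma) (r : R) : option M :=
  match rt with
  | [::] => Some e
  | s :: rt' =>
      match psi_star_rev l rt' (dR r s), psi (foldl dL l (rev rt')) s r with
      | Some a, Some b => Some (op a b)
      | _, _ => None
      end
  end.

(* psi^*(l, t, r); psi^*(l, t s, r) = psi^*(l, t, dR r s) o psi(dL^*(l,t), s, r) *)
Definition psi_star (l : L) (t : seq Sigma) (r : R) : option M :=
  psi_star_rev l (rev t) r.

Definition bimachine_output (sL : L) (sR : R) (t : seq Sigma) : option M :=
  psi_star sL t sR.
End Bimachine.

(* Both automata are subset constructions: after a prefix u the left automaton
   holds the states reached from I by runs on u ending with a letter, and before
   a suffix v the right automaton holds the states from which F is reachable on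
   v.  For q in the intersection X of the two, the prefix outputs w_q become
   equal once completed by suffix outputs (functionality), so the tuple (w_q)
   is equalizable and has an mge g; computed for one representative prefix, g
   is by right cancellation balanced for every prefix reaching the same left
   state.  The bimachine maintains that its output so far is w_q g(q) for all
   q in X.  Reading a letter, mge-generality of g yields a factor z with
   g(p) z = w' g'(q') along a transition p -> q', which is the letter's output;
   at the right end g is replaced by the actual tail outputs. *)

From mathcomp Require Import all_boot boolp.
Set Implicit Arguments. Unset Strict Implicit. Unset Printing Implicit Defensive.

Lemma choice_in (T U : Type) (P : T -> Prop) (R : T -> U -> Prop) (u0 : U) :
  (forall t, P t -> exists u, R t u) -> exists f : T -> U, forall t, P t -> R t (f t).
Proof.
move=> PR; have [f Hf] : {f : T -> U & forall t, P t -> R t (f t)}.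
  apply: (choice (P := fun t u => P t -> R t u)) => t.
  by have [/PR [u Ru]|nPt] := pselect (P t); [exists u | exists u0].
by exists f.
Qed.

Section FamilyMge.
Variables (M : eqType) (op : M -> M -> M) (e : M).
Local Infix "**" := op (at level 40, left associativity).
Hypothesis opA : forall a b c, a ** (b ** c) = a ** b ** c.
Hypothesis mulem : forall a, e ** a = a.
Hypothesis pair_mge : forall m1 m2, equalizable op m1 m2 -> exists x, mge op m1 m2 x.

Lemma seq_family_mge (T : eqType) (s : seq T) (a : T -> M) :
  (exists y c, {in s, forall q, a q ** y q = c}) ->
  exists g c0, {in s, forall q, a q ** g q = c0} /\
    forall y c, {in s, forall q, a q ** y q = c} ->
      exists z, c = c0 ** z /\ {in s, forall q, y q = g q ** z}.
Proof.
elim: s => [|x s IH] [y [c eq_y]].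
  by exists (fun _ => e), e; split=> // y' c' _; exists c'.
have eq_y_s : {in s, forall q, a q ** y q = c}.
  by move=> q sq; rewrite eq_y ?inE ?sq ?orbT.
have [g [c0 [eq_g inst_g]]] := IH (ex_intro _ y (ex_intro _ c eq_y_s)).
have [z [def_c _]] := inst_g y c eq_y_s.
have [[h1 h2] [/= eq_h inst_h]] : exists h, mge op c0 (a x) h.
  by apply: pair_mge; exists (z, y x); rewrite /equalizer /= -def_c eq_y ?mem_head.
exists (fun q => if q == x then h2 else g q ** h1), (c0 ** h1); split.
  move=> q; rewrite inE; case: eqP => [-> _ | _ /= sq]; first by rewrite eq_h.
  by rewrite opA eq_g.
move=> y' c' eq_y'.
have eq_y'_s : {in s, forall q, a q ** y' q = c'}.
  by move=> q sq; rewrite eq_y' ?inE ?sq ?orbT.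
have [z1 [def_c' def_y']] := inst_g y' c' eq_y'_s.
have [z' [/= def_z1 def_yx]] : instance_of op (h1, h2) (z1, y' x).
  by apply: inst_h; rewrite /equalizer /= -def_c' eq_y' ?mem_head.
exists z'; split; first by rewrite def_c' def_z1 opA.
move=> q; rewrite inE; case: eqP => [-> // | _ /= sq].
by rewrite def_y' // def_z1 opA.
Qed.

Variable T : finType.

Definition equalizes (S : {set T}) (a b : T -> M) :=
  {in S &, forall q1 q2, a q1 ** b q1 = a q2 ** b q2}.

Definition factors_through (S : {set T}) (b g : T -> M) :=
  exists z, {in S, forall q, b q = g q ** z}.

Definition mge_on (S : {set T}) (a g : T -> M) :=
  equalizes S a g /\ forall b, equalizes S a b -> factors_through S b g.

Lemma pairwise_eq_const (U : Type) (S : {set T}) (f : T -> U) (u0 : U) :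
  {in S &, forall x y, f x = f y} -> exists c, {in S, forall x, f x = c}.
Proof.
case: (set_0Vmem S) => [-> _ | [x Sx] eq_f]; first by exists u0 => y; rewrite inE.
by exists (f x) => y Sy; apply: eq_f.
Qed.

Lemma family_mge (S : {set T}) (a : T -> M) :
  (exists b, equalizes S a b) -> exists g, mge_on S a g.
Proof.
case=> b /(pairwise_eq_const e) [c eq_b].
have [|g [c0 [eq_g inst_g]]] := @seq_family_mge _ (enum S) a.
  by exists b, c => q; rewrite mem_enum; apply: eq_b.
exists g; split=> [q1 q2 Sq1 Sq2 | y /(pairwise_eq_const e) [cy eq_y]].
  by rewrite !eq_g ?mem_enum.
have [|z [_ def_y]] := inst_g y cy; first by move=> q; rewrite mem_enum; apply: eq_y.
by exists z => q Sq; rewrite def_y ?mem_enum.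
Qed.

End FamilyMge.

Section BimachineUnfold.
Variables (M : eqType) (op : M -> M -> M) (e : M) (Sigma L R : finType).
Variables (dL : L -> Sigma -> L) (dR : R -> Sigma -> R) (psi : L -> Sigma -> R -> option M).

Lemma psi_star_rcons l t s r :
  psi_star op e dL dR psi l (rcons t s) r =
  match psi_star op e dL dR psi l t (dR r s), psi (foldl dL l t) s r with
  | Some a, Some b => Some (op a b)
  | _, _ => None
  end.
Proof. by rewrite /psi_star rev_rcons /= revK. Qed.

End BimachineUnfold.

Section Construction.
Variables (M : eqType) (op : M -> M -> M) (e : M).
Local Infix "**" := op (at level 40, left associativity).
Hypothesis opA : forall a b c, a ** (b ** c) = a ** b ** c.
Hypothesis mulem : forall a, e ** a = a.
Hypothesis mulme : forall a, a ** e = a.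
Hypothesis mulIr : forall a b c, a ** c = b ** c -> a = b.
Hypothesis pair_mge : forall m1 m2, equalizable op m1 m2 -> exists x, mge op m1 m2 x.

Variables (Sigma Q : finType) (I F : {set Q}).
Variable Delta : seq (Q * (option Sigma * M) * Q).
Hypothesis Hfun : functional op e Delta I F.
Hypothesis Heps : lang op e Delta I F [::] e.

Local Notation ds := (delta_star op e Delta).
Local Notation lang := (lang op e Delta I F).

Lemma ds_cat p u w1 q v w2 r : ds p u w1 q -> ds q v w2 r -> ds p (u ++ v) (w1 ** w2) r.
Proof.
move=> H1 H2; elim: H2 H1 => [q'|q1 v0 w q2 a m q3 _ IH Ht] H1; first by rewrite cats0 mulme.
by have := ds_step (IH H1) Ht; case: a {Ht} => [s|]; rewrite -?rcons_cat opA.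
Qed.

(* Empty runs and runs ending with a letter transition: left states collect
   their targets, so trailing epsilon moves are accounted for on the right. *)
Definition lpath p u w q : Prop :=
  (u = [::] /\ q = p /\ w = e) \/
  exists u' s q' w' m,
    [/\ u = rcons u' s, ds p u' w' q', (q', (Some s, m), q) \in Delta & w = w' ** m].

Lemma lpath0 p : lpath p [::] e p.
Proof. by left. Qed.

Lemma lpath_step p u w q s m q' :
  ds p u w q -> (q, (Some s, m), q') \in Delta -> lpath p (rcons u s) (w ** m) q'.
Proof. by move=> Hd Ht; right; exists u, s, q, w, m. Qed.

Lemma lpath0_inv p w q : lpath p [::] w q -> q = p /\ w = e.
Proof. by case=> [[_ //] | [u [s [? [? [? [/(congr1 size)]]]]]]]; rewrite size_rcons. Qed.

Lemma lpath_rcons_inv p u s w q' : lpath p (rcons u s) w q' ->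
  exists q w1 m, [/\ ds p u w1 q, (q, (Some s, m), q') \in Delta & w = w1 ** m].
Proof.
case=> [[/(congr1 size)] | [u' [s' [q [w1 [m [/rcons_inj [-> ->] Hd Ht ->]]]]]]].
  by rewrite size_rcons.
by exists q, w1, m.
Qed.

Lemma lpath_ds p u w q : lpath p u w q -> ds p u w q.
Proof.
case=> [[-> [-> ->]] | [u' [s [q' [w' [m [-> Hd Ht ->]]]]]]]; first exact: ds_refl.
exact: ds_step Hd Ht.
Qed.

Lemma ds_split p x W r : ds p x W r -> forall u v, x = u ++ v ->
  exists q w1 w2, [/\ lpath p u w1 q, ds q v w2 r & W = w1 ** w2].
Proof.
elim=> [q | q1 x0 w q2 [s|] m q3 Hd IH Ht] u v.
- case: u => [|? ?] //; case: v => [|? ?] // _.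
  by exists q, e, e; rewrite mulem; split; [exact: lpath0 | exact: ds_refl |].
- case/lastP: v => [|v s'].
    rewrite cats0 => <-; exists q3, (w ** m), e; rewrite mulme.
    by split=> //; [exact: lpath_step Hd Ht | exact: ds_refl].
  rewrite -rcons_cat => /rcons_inj [/IH [q [w1 [w2 [H1 H2 ->]]]] <-].
  by exists q, w1, (w2 ** m); rewrite opA; split=> //; exact: ds_step H2 Ht.
- move=> /IH [q [w1 [w2 [H1 H2 ->]]]].
  by exists q, w1, (w2 ** m); rewrite opA; split=> //; exact: ds_step H2 Ht.
Qed.

Lemma lpath_snoc a u w1 b s w2 c :
  lpath a u w1 b -> lpath b [:: s] w2 c -> lpath a (rcons u s) (w1 ** w2) c.
Proof.
move=> H1 /(@lpath_rcons_inv _ [::]) [q [w [m [Hd Ht ->]]]].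
by rewrite opA -[u]cats0; apply: lpath_step Ht; apply: ds_cat (lpath_ds H1) Hd.
Qed.

Lemma eps_lpath p r f u s w q :
  ds p [::] r f -> lpath f (rcons u s) w q -> lpath p (rcons u s) (r ** w) q.
Proof.
move=> Hr /lpath_rcons_inv [q' [w1 [m [Hd Ht ->]]]].
by rewrite opA; apply: lpath_step Ht; apply: ds_cat Hr Hd.
Qed.

Definition prefix_run t w q := exists2 p, p \in I & lpath p t w q.
Definition suffix_run q v w := exists2 f, f \in F & ds q v w f.

Lemma prefix_run_rcons u w p s w' q :
  prefix_run u w p -> lpath p [:: s] w' q -> prefix_run (rcons u s) (w ** w') q.
Proof. by case=> p0 Ip0 H1 H2; exists p0 => //; apply: lpath_snoc H1 H2. Qed.

Lemma lang_cat u v m : lang (u ++ v) m <->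
  exists q w1 w2, [/\ prefix_run u w1 q, suffix_run q v w2 & m = w1 ** w2].
Proof.
split=> [[p [f [Ip Ff /ds_split/(_ u v erefl) [q [w1 [w2 [H1 H2 ->]]]]]]] |].
  by exists q, w1, w2; split=> //; [exists p | exists f].
case=> q [w1 [w2 [[p Ip H1] [f Ff H2] ->]]].
by exists p, f; split=> //; apply: ds_cat (lpath_ds H1) H2.
Qed.

Lemma run_outputs_eq u v q1 w1 V1 q2 w2 V2 :
  prefix_run u w1 q1 -> suffix_run q1 v V1 ->
  prefix_run u w2 q2 -> suffix_run q2 v V2 -> w1 ** V1 = w2 ** V2.
Proof.
move=> H1 H1' H2 H2'; apply: (Hfun (u := u ++ v)); apply/lang_cat.
  by exists q1, w1, V1.
by exists q2, w2, V2.
Qed.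


Definition stepL (X : {set Q}) (s : Sigma) : {set Q} :=
  [set q | `[< exists2 p, p \in X & exists w, lpath p [:: s] w q >]].
Definition stepR (Y : {set Q}) (s : Sigma) : {set Q} :=
  [set p | `[< exists2 q, q \in Y & exists w, lpath p [:: s] w q >]].
Definition startR : {set Q} := [set q | `[< exists w, suffix_run q [::] w >]].

Definition left_state (u : seq Sigma) : {set Q} := foldl stepL I u.
Definition right_state (v : seq Sigma) : {set Q} := foldr (fun s Y => stepR Y s) startR v.

Lemma stepLP (X : {set Q}) s q :
  reflect (exists2 p, p \in X & exists w, lpath p [:: s] w q) (q \in stepL X s).
Proof. by rewrite inE; apply: asboolP. Qed.

Lemma stepRP (Y : {set Q}) s p :
  reflect (exists2 q, q \in Y & exists w, lpath p [:: s] w q) (p \in stepR Y s).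
Proof. by rewrite inE; apply: asboolP. Qed.

Lemma startRP q : reflect (exists w, suffix_run q [::] w) (q \in startR).
Proof. by rewrite inE; apply: asboolP. Qed.

Lemma left_state_rcons u s : left_state (rcons u s) = stepL (left_state u) s.
Proof. by rewrite /left_state foldl_rcons. Qed.

Lemma left_stateP u q : q \in left_state u <-> exists w, prefix_run u w q.
Proof.
elim/last_ind: u q => [|u s IH] q.
  split=> [Iq | [w [p Ip /lpath0_inv [-> _]]] //].
  by exists e, q => //; apply: lpath0.
rewrite left_state_rcons; split=> [/stepLP [p /IH [w1 H1] [w2 H2]] |].
  by exists (w1 ** w2); apply: prefix_run_rcons H1 H2.
case=> w [p0 Ip0 /lpath_rcons_inv [q' [w1 [m [Hd Ht _]]]]].
have [p [w2 [w3 [H1 H2 _]]]] := ds_split Hd (esym (cats0 u)).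
apply/stepLP; exists p; first by apply/IH; exists w2, p0.
by exists (w3 ** m); apply: lpath_step H2 Ht.
Qed.

Lemma right_stateP v q : q \in right_state v <-> exists w, suffix_run q v w.
Proof.
elim: v q => [|s v IH] q; first by split=> /startRP.
split=> [/stepRP [q1 /IH [w1 [f Ff H1]] [w H]] |].
  by exists (w ** w1), f => //; apply: ds_cat (lpath_ds H) H1.
case=> W [f Ff /ds_split/(_ [:: s] v erefl) [q1 [w1 [w2 [H1 H2 _]]]]].
by apply/stepRP; exists q1; [apply/IH; exists w2, f | exists w1].
Qed.

Lemma prefix_outputs u : exists a, forall q, q \in left_state u -> prefix_run u (a q) q.
Proof.
by apply: (choice_in (R := fun q a => prefix_run u a q) e) => q /left_stateP.
Qed.

Lemma suffix_outputs v : exists V, forall q, q \in right_state v -> suffix_run q v (V q).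
Proof.
by apply: (choice_in (R := fun q V => suffix_run q v V) e) => q /right_stateP.
Qed.

(* [b] is a candidate for the output pending at the boundary between the left
   state [X] and the right state [Y]. *)
Definition balanced X Y (b : Q -> M) := forall t, left_state t = X ->
  forall q1 q2 w1 w2, q1 \in X :&: Y -> q2 \in X :&: Y ->
    prefix_run t w1 q1 -> prefix_run t w2 q2 -> w1 ** b q1 = w2 ** b q2.

Definition most_general_balanced X Y g :=
  balanced X Y g /\ forall b, balanced X Y b -> factors_through op (X :&: Y) b g.

Lemma suffix_outputs_balanced v V X :
  (forall q, q \in right_state v -> suffix_run q v (V q)) -> balanced X (right_state v) V.
Proof.
move=> HV t _ q1 q2 w1 w2 /setIP [_ Yq1] /setIP [_ Yq2] H1 H2.
exact: run_outputs_eq H1 (HV q1 Yq1) H2 (HV q2 Yq2).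
Qed.

(* Right cancellation transfers an mge of the outputs of one representative
   left context to all left contexts reaching the same state. *)
Lemma mge_outputs_most_general u v a g :
  (forall q, q \in left_state u -> prefix_run u (a q) q) ->
  mge_on op (left_state u :&: right_state v) a g ->
  most_general_balanced (left_state u) (right_state v) g.
Proof.
move=> Ha [_ gen_g].
have eq_a b : balanced (left_state u) (right_state v) b ->
    equalizes op (left_state u :&: right_state v) a b.
  move=> bal_b q1 q2 /[dup] Sq1 /setIP [Xq1 _] /[dup] Sq2 /setIP [Xq2 _].
  exact: bal_b (Ha q1 Xq1) (Ha q2 Xq2).
split=> [t eq_t q1 q2 w1 w2 Sq1 Sq2 H1 H2 | b /eq_a]; last exact: gen_g.
have [V HV] := suffix_outputs v.
have bal_V := suffix_outputs_balanced (X := left_state u) HV.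
have [z def_V] := gen_g V (eq_a V bal_V).
apply: (mulIr (c := z)); rewrite -!opA -!def_V //.
exact: bal_V eq_t q1 q2 w1 w2 Sq1 Sq2 H1 H2.
Qed.

(* The bimachine outputs [e] on the empty prefix, so at the left state [I] the
   mge [e] of the constant family of outputs is chosen. *)
Lemma most_general_balanced_exists X Y : exists g,
  forall u v, left_state u = X -> right_state v = Y ->
    most_general_balanced X Y g /\ (X = I -> forall q, g q = e).
Proof.
have [[u0 [v0 [<- <-]]] | none] := pselect (exists u v, left_state u = X /\ right_state v = Y);
  last by exists (fun _ => e) => u v eq_u eq_v; case: none; exists u, v.
have [XI | XnI] := eqVneq (left_state u0) I.
  exists (fun _ => e) => _ _ _ _; split=> //; rewrite XI.
  apply: (mge_outputs_most_general (u := [::]) (a := fun _ => e)) => [q Iq | ].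
    by exists q => //; apply: lpath0.
  split=> [// | b eq_b].
  have /(pairwise_eq_const e) [c eq_c] :
      {in left_state [::] :&: right_state v0 &, forall q1 q2, b q1 = b q2}.
    by move=> q1 q2 Sq1 Sq2; have := eq_b q1 q2 Sq1 Sq2; rewrite !mulem.
  by exists c => q Sq; rewrite mulem eq_c.
have [a Ha] := prefix_outputs u0.
have [V HV] := suffix_outputs v0.
have [|g mge_g] := family_mge opA mulem pair_mge (a := a) (S := left_state u0 :&: right_state v0).
  exists V => q1 q2 /[dup] Sq1 /setIP [Xq1 _] /[dup] Sq2 /setIP [Xq2 _].
  exact: suffix_outputs_balanced HV u0 erefl q1 q2 _ _ Sq1 Sq2 (Ha q1 Xq1) (Ha q2 Xq2).
exists g => _ _ _ _; split; first exact: mge_outputs_most_general Ha mge_g.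
by move/eqP; rewrite (negbTE XnI).
Qed.

Section Delay.
Variables (tail : Q -> M) (G : {set Q} -> {set Q} -> Q -> M).
Hypothesis tailP : forall q, q \in startR -> suffix_run q [::] (tail q).
Hypothesis GP : forall X Y u v, left_state u = X -> right_state v = Y ->
  most_general_balanced X Y (G X Y) /\ (X = I -> forall q, G X Y q = e).

(* At the right end the pending output must be the actual tail output, which
   need not be most general. *)
Definition delay X Y : Q -> M := if Y == startR then tail else G X Y.

Lemma delay_balanced u v :
  balanced (left_state u) (right_state v) (delay (left_state u) (right_state v)).
Proof.
rewrite /delay; case: eqP => [-> | _]; last exact: (GP (u := u) (v := v) erefl erefl).1.1.
exact: (suffix_outputs_balanced (v := [::]) tailP).
Qed.

Lemma delay_init v q : q \in I :&: right_state v -> delay I (right_state v) q = e.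
Proof.
case/setIP=> Iq Yq; rewrite /delay; case: eqP => [eq_Y | _].
  apply/esym/(Hfun Heps); rewrite -[tail q]mulem; apply/(lang_cat [::] [::]).
  exists q, e, (tail q); split=> //; first by exists q => //; apply: lpath0.
  by apply: tailP; rewrite -eq_Y.
exact: (GP (u := [::]) erefl erefl).2.
Qed.

Lemma delay_final X q : q \in startR -> suffix_run q [::] (delay X startR q).
Proof. by rewrite /delay eqxx; apply: tailP. Qed.

Definition anchored X s Y z := exists p q w,
  [/\ p \in X :&: stepR Y s, q \in Y, lpath p [:: s] w q &
      delay X (stepR Y s) p ** z = w ** delay (stepL X s) Y q].

Lemma anchored_at_start u v s (X := left_state u) (Y := right_state v) :
  stepR Y s = startR -> stepL X s :&: Y != set0 -> exists z, anchored X s Y z.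
Proof.
move=> eq_R /set0Pn [q0 /setIP [/stepLP [p Xp [w0 Hw0]] Yq0]].
have Rp : p \in stepR Y s by apply/stepRP; exists q0 => //; exists w0.
have [f Ff Hpf] : suffix_run p [::] (tail p) by apply: tailP; rewrite -eq_R.
have : f \in stepR Y s by rewrite eq_R; apply/startRP; exists e, f => //; apply: ds_refl.
case/stepRP=> q Yq [w Hw].
exists (w ** delay (stepL X s) Y q), p, q, (tail p ** w); split=> //.
- by rewrite inE Xp Rp.
- exact: (eps_lpath (u := [::]) Hpf Hw).
- by rewrite {1}/delay eq_R eqxx opA.
Qed.

Lemma anchored_inside u v s (X := left_state u) (Y := right_state v) :
  stepR Y s != startR -> stepL X s :&: Y != set0 -> exists z, anchored X s Y z.
Proof.
move=> neq_R /set0Pn [q0 /setIP [/stepLP [p Xp [w0 Hw0]] Yq0]].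
have Rp : p \in stepR Y s by apply/stepRP; exists q0 => //; exists w0.
have [next Hnext] : exists next : Q -> Q * M, forall p', p' \in stepR Y s ->
    (next p').1 \in Y /\ lpath p' [:: s] (next p').2 (next p').1.
  apply: (choice_in (R := fun p' qw => qw.1 \in Y /\ lpath p' [:: s] qw.2 qw.1) (q0, e)).
  by move=> p' /stepRP [q Yq [w Hw]]; exists (q, w).
pose b p' := (next p').2 ** delay (stepL X s) Y (next p').1.
have bal_b : balanced X (stepR Y s) b.
  move=> t eq_t q1 q2 w1 w2 /setIP [Xq1 /Hnext [Yq1 N1]] /setIP [Xq2 /Hnext [Yq2 N2]] H1 H2.
  have := delay_balanced (u := rcons t s) (v := v); rewrite left_state_rcons eq_t => bal.
  rewrite /b !opA; apply: (bal (rcons t s)); rewrite ?left_state_rcons ?eq_t //.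
  - by rewrite inE Yq1 andbT; apply/stepLP; exists q1 => //; exists (next q1).2.
  - by rewrite inE Yq2 andbT; apply/stepLP; exists q2 => //; exists (next q2).2.
  - exact: prefix_run_rcons H1 N1.
  - exact: prefix_run_rcons H2 N2.
have [[_ gen_G] _] : most_general_balanced X (stepR Y s) (G X (stepR Y s)) /\ _ :=
  GP (u := u) (v := s :: v) erefl erefl.
have [z def_b] := gen_G b bal_b.
have [Yq Hq] := Hnext p Rp.
exists z, p, (next p).1, (next p).2; split=> //; first by rewrite inE Xp Rp.
by rewrite /delay (negbTE neq_R) -def_b // inE Xp Rp.
Qed.

Lemma anchored_exists u v s (X := left_state u) (Y := right_state v) :
  stepL X s :&: Y != set0 -> exists z, anchored X s Y z.
Proof.
by case: (eqVneq (stepR Y s) startR) => [/anchored_at_start | /anchored_inside]; apply.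
Qed.

Definition delayed_output t Y m := forall q w, q \in left_state t :&: Y ->
  prefix_run t w q -> m = w ** delay (left_state t) Y q.

Lemma delayed_output_rcons u v s m z (Y := right_state v) :
  delayed_output u (stepR Y s) m -> anchored (left_state u) s Y z ->
  delayed_output (rcons u s) Y (m ** z).
Proof.
move=> inv [p [q' [w' [/[dup] Sp /setIP [Xp _] Yq' Hw' anchor]]]] q w.
have [wp Hwp] := (left_stateP u p).1 Xp.
have := delay_balanced (u := rcons u s) (v := v); rewrite left_state_rcons => bal Hq Hrun.
rewrite (inv p wp Sp Hwp) -opA anchor opA.
apply: (bal (rcons u s)) => //; first exact: left_state_rcons.
- by rewrite inE Yq' andbT; apply/stepLP; exists p => //; exists w'.
- exact: prefix_run_rcons Hwp Hw'.
Qed.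

Lemma psi_exists : exists psi : {set Q} -> Sigma -> {set Q} -> option M,
  (forall X s Y, stepL X s :&: Y = set0 -> psi X s Y = None) /\
  (forall u v s (X := left_state u) (Y := right_state v), stepL X s :&: Y != set0 ->
     exists2 z, psi X s Y = Some z & anchored X s Y z).
Proof.
pose spec (x : {set Q} * Sigma * {set Q}) o := let: (X, s, Y) := x in
  (stepL X s :&: Y = set0 -> o = None) /\
  (forall u v, left_state u = X -> right_state v = Y -> stepL X s :&: Y != set0 ->
     exists2 z, o = Some z & anchored X s Y z).
have [psi Hpsi] : {psi & forall x, spec x (psi x)}.
  apply: choice => -[[X s] Y].
  have [[u [v [<- <-]]] | none] := pselect (exists u v, left_state u = X /\ right_state v = Y);
    last by exists None; split=> // u v eq_u eq_v; case: none; exists u, v.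
  have [E | NE] := eqVneq (stepL (left_state u) s :&: right_state v) set0.
    by exists None; split=> // ? ? ? ?; rewrite E eqxx.
  have [z Hz] := anchored_exists NE.
  by exists (Some z); split=> [/eqP | *]; [rewrite (negbTE NE) | exists z].
exists (fun X s Y => psi (X, s, Y)); split=> [X s Y | u v s X Y].
  by case: (Hpsi (X, s, Y)).
by case: (Hpsi (X, s, Y)) => _ /(_ u v erefl erefl).
Qed.


Section Output.
Variable psi : {set Q} -> Sigma -> {set Q} -> option M.
Hypothesis psi_none : forall X s Y, stepL X s :&: Y = set0 -> psi X s Y = None.
Hypothesis psi_some : forall u v s (X := left_state u) (Y := right_state v),
  stepL X s :&: Y != set0 -> exists2 z, psi X s Y = Some z & anchored X s Y z.

Local Notation output := (psi_star op e stepL stepR psi I).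

Lemma output_delayed t v : left_state t :&: right_state v != set0 ->
  exists2 m, output t (right_state v) = Some m & delayed_output t (right_state v) m.
Proof.
elim/last_ind: t v => [|t s IH] v ne.
  exists e => // q w Hq [p Ip /lpath0_inv [_ ->]].
  by rewrite mulem (delay_init Hq).
have ne' : stepL (left_state t) s :&: right_state v != set0 by rewrite -left_state_rcons.
have [q0 /setIP [/stepLP [p Xp [w0 Hw0]] Yq0]] := set0Pn _ ne'.
have [|m Hm inv] := IH (s :: v).
  by apply/set0Pn; exists p; rewrite inE Xp; apply/stepRP; exists q0 => //; exists w0.
have [z Hz anchor] := psi_some ne'.
by exists (m ** z); [rewrite psi_star_rcons Hm Hz | apply: delayed_output_rcons inv anchor].
Qed.

Lemma output_undefined t : left_state t :&: startR = set0 -> output t startR = None.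
Proof.
case/lastP: t => [|t s] E.
  case: Heps => p [f [Ip Ff Hd]]; suff : p \in set0 by rewrite inE.
  by rewrite -E inE Ip; apply/startRP; exists e, f.
by rewrite psi_star_rcons psi_none -?left_state_rcons //; case: psi_star.
Qed.

Lemma output_correct t m : output t startR = Some m <-> lang t m.
Proof.
rewrite -[t in lang t]cats0 lang_cat; split=> [out_t | [q [w1 [w2 [H1 H2 ->]]]]].
  have [/output_undefined | ne] := eqVneq (left_state t :&: startR) set0; first by rewrite out_t.
  have [m0 out0 inv] := output_delayed (v := [::]) ne.
  have [q /setIP [Xq Rq]] := set0Pn _ ne; have [w Hw] := (left_stateP t q).1 Xq.
  exists q, w, (delay (left_state t) startR q); split; first exact: Hw.
    exact: delay_final.
  by move: out_t; rewrite out0 => -[<-]; apply: inv Hw; rewrite inE Xq.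
have Sq : q \in left_state t :&: startR.
  by rewrite inE; apply/andP; split; [apply/left_stateP; exists w1 | apply/startRP; exists w2].
have [m0 out0 inv] := output_delayed (v := [::]) (introT (set0Pn _) (ex_intro _ q Sq)).
rewrite out0 (inv q w1 Sq H1); congr Some.
have Rq : q \in startR by case/setIP: Sq.
exact: (run_outputs_eq H1 (delay_final (left_state t) Rq) H1 H2).
Qed.

End Output.
End Delay.

Lemma card_sets : #|{set Q}| = 2 ^ #|Q|.
Proof. by rewrite -[LHS]cardsT -powersetT card_powerset cardsT. Qed.

Lemma bimachine_exists :
  exists (L R : finType) (sL : L) (sR : R)
         (dL : L -> Sigma -> L) (dR : R -> Sigma -> R)
         (psi : L -> Sigma -> R -> option M),
    [/\ (#|L| <= 2 ^ #|Q|)%N, (#|R| <= 2 ^ #|Q|)%N &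
        forall (t : seq Sigma) (m : M),
          bimachine_output op e dL dR psi sL sR t = Some m <-> lang t m].
Proof.
have [tail tailP] : exists tail : Q -> M, forall q, q \in startR -> suffix_run q [::] (tail q).
  by apply: (choice_in (R := fun q w => suffix_run q [::] w) e) => q /startRP.
have G_X X : exists G_X : {set Q} -> Q -> M, forall Y u v,
    left_state u = X -> right_state v = Y ->
    most_general_balanced X Y (G_X Y) /\ (X = I -> forall q, G_X Y q = e).
  by have [G_X HG_X] := choice (most_general_balanced_exists X); exists G_X.
have [G GP] := choice G_X.
have [psi [psi_none psi_some]] := psi_exists tailP GP.
exists {set Q}, {set Q}, I, startR, stepL, stepR, psi.
by rewrite card_sets; split=> // t m; apply: output_correct psi_none psi_some t m.
Qed.

End Construction.

Theorem theorem2
  (M : eqType) (op : M -> M -> M) (e : M)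
  (eqz : M -> M -> bool) (eta : M -> M -> M * M) (inv : M -> M)
  (Hmge : is_mge_monoid op e)
  (Heff : is_effective op e eqz eta inv)
  (Sigma Q : finType) (I F : {set Q})
  (Delta : seq (Q * (option Sigma * M) * Q))
  (Hfun : functional op e Delta I F)
  (Heps : lang op e Delta I F [::] e) :
  exists (L R : finType) (sL : L) (sR : R)
         (dL : L -> Sigma -> L) (dR : R -> Sigma -> R)
         (psi : L -> Sigma -> R -> option M),
    [/\ (#|L| <= 2 ^ #|Q|)%N, (#|R| <= 2 ^ #|Q|)%N &
        forall (t : seq Sigma) (m : M),
          bimachine_output op e dL dR psi sL sR t = Some m <->
          lang op e Delta I F t m].
Proof.
(* Effectiveness only matters for computing the bimachine, not for its existence. *)
case: Hmge => [[opA mulem mulme] mulIr pair_mge].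
exact (bimachine_exists opA mulem mulme mulIr pair_mge Hfun Heps).
Qed.
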